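(* Let $K\ge 2$ and let $g(\mathbf{x})=\sum_{j=1}^K \pi_j\,\phi(\mathbf{x};\boldsymbol{\mu}_j,\Sigma_j)$, $\mathbf{x}\in\mathbb{R}^D$, be a mixture of $D$-variate normal densities with $\pi_j\in[0,1]$, $\sum_j\pi_j=1$ and positive definite $\Sigma_j$. Fix $\boldsymbol{\alpha}\in\mathcal{S}_K$ and let $\mathbf{w}\in\mathbf{W}$ (defined below). Then along the line $\{\mathbf{x}^*(\boldsymbol{\alpha})+\delta\mathbf{w}:\delta\in\mathbb{R}\}$ the function $g$ attains its maximum value at $\delta=0$.
   Context: $\phi(\mathbf{x};\boldsymbol{\mu},\Sigma)$ is the normal density with mean $\boldsymbol{\mu}$ and covariance $\Sigma$. $\mathcal{S}_K=\{\boldsymbol{\alpha}\in\mathbb{R}^K:\alpha_i\in[0,1],\sum_i\alpha_i=1\}$. The ridgeline function is $\mathbf{x}^*(\boldsymbol{\alpha})=S_{\boldsymbol{\alpha}}^{-1}\sum_{j=1}^K\alpha_j\Sigma_j^{-1}\boldsymbol{\mu}_j$, where $S_{\boldsymbol{\alpha}}=\sum_{j=1}^K\alpha_j\Sigma_j^{-1}$. Set $\mathbf{v}_j=\Sigma_j^{-1}(\mathbf{x}^*(\boldsymbol{\alpha})-\boldsymbol{\mu}_j)$ for $j=1,\dots,K$, and $\mathbf{d}_j=S_{\boldsymbol{\alpha}}^{-1}(\mathbf{v}_j-\mathbf{v}_K)$ for $j=1,\dots,K-1$ (the derivative vectors of $\mathbf{x}^*$ with respect to $\alpha_1,\dots,\alpha_{K-1}$).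 Define $\mathbf{W}=\{\mathbf{w}\in\mathbb{R}^D:\mathbf{w}'S_{\boldsymbol{\alpha}}\mathbf{d}_j=0\text{ for all }j=1,\dots,K-1\}$. *)

From HB Require Import structures.
From mathcomp Require Import all_boot all_order all_algebra.
From mathcomp Require Import all_classical all_reals all_analysis.
Set Implicit Arguments. Unset Strict Implicit. Unset Printing Implicit Defensive.
Import Order.TTheory GRing.Theory Num.Theory.
Local Open Scope ring_scope.

Section Defs.
Variable R : realType.

Definition sc (A : 'M[R]_1) : R := A ord0 ord0.

Definition posdef (D : nat) (S : 'M[R]_D) : Prop :=
  S^T = S /\ forall x : 'cV[R]_D, x != 0 -> 0 < sc (x^T *m S *m x).

Definition normal_pdf (D : nat) (x mu : 'cV[R]_D) (S : 'M[R]_D) : R :=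
  (Num.sqrt ((2 * pi) ^+ D * \det S))^-1 *
  expR (- (sc ((x - mu)^T *m invmx S *m (x - mu))) / 2).

Definition mixture (D K : nat) (p : 'I_K -> R) (mu : 'I_K -> 'cV[R]_D)
  (S : 'I_K -> 'M[R]_D) (x : 'cV[R]_D) : R :=
  \sum_(j < K) p j * normal_pdf x (mu j) (S j).

Definition simplex (K : nat) (a : 'I_K -> R) : Prop :=
  (forall j, 0 <= a j <= 1) /\ \sum_(j < K) a j = 1.

Definition S_alpha (D K : nat) (S : 'I_K -> 'M[R]_D) (a : 'I_K -> R) : 'M[R]_D :=
  \sum_(j < K) a j *: invmx (S j).

Definition ridgeline (D K : nat) (mu : 'I_K -> 'cV[R]_D) (S : 'I_K -> 'M[R]_D)
  (a : 'I_K -> R) : 'cV[R]_D :=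
  invmx (S_alpha S a) *m \sum_(j < K) (a j *: (invmx (S j) *m mu j)).

Definition vvec (D K : nat) (mu : 'I_K -> 'cV[R]_D) (S : 'I_K -> 'M[R]_D)
  (a : 'I_K -> R) (j : 'I_K) : 'cV[R]_D :=
  invmx (S j) *m (ridgeline mu S a - mu j).

(* d_j = S_alpha^{-1} (v_j - v_K); here k plays the role of the last index K *)
Definition dvec (D K : nat) (mu : 'I_K -> 'cV[R]_D) (S : 'I_K -> 'M[R]_D)
  (a : 'I_K -> R) (j k : 'I_K) : 'cV[R]_D :=
  invmx (S_alpha S a) *m (vvec mu S a j - vvec mu S a k).

(* w in W: w' S_alpha d_j = 0 for all j = 1..K-1
   (0-based: j < K-1, and the last index k has value K-1) *)
Definition inW (D K : nat) (mu : 'I_K -> 'cV[R]_D) (S : 'I_K -> 'M[R]_D)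
  (a : 'I_K -> R) (w : 'cV[R]_D) : Prop :=
  forall j k : 'I_K, (k : nat) = K.-1 -> (j < K.-1)%N ->
    sc (w^T *m S_alpha S a *m dvec mu S a j k) = 0.

End Defs.

(** Since [S_alpha x* = sum_j alpha_j Sigma_j^-1 mu_j], the vectors
    [v_j = Sigma_j^-1 (x* - mu_j)] satisfy [sum_j alpha_j v_j = 0].  For [w] in [W]
    the numbers [w' v_j] are all equal to [w' v_K]; weighting them by [alpha_j]
    shows that this common value is [0].  Hence [x* - mu_j] is [Sigma_j^-1]-orthogonal
    to [w] for every [j], so each Mahalanobis distance [(x - mu_j)' Sigma_j^-1 (x - mu_j)]
    is minimal on the line at [delta = 0]: every component density, and therefore the
    mixture, is maximal there. *)
From Pilot Require Import Defs.
From HB Require Import structures.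
From mathcomp Require Import all_boot all_order all_algebra.
From mathcomp Require Import all_classical all_reals all_analysis.
From mathcomp Require Import zify.
Import Order.TTheory GRing.Theory Num.Theory.
Local Open Scope ring_scope.
Set Implicit Arguments. Unset Strict Implicit.

Section QuadraticForms.
Variable R : realType.

Lemma scD (A B : 'M[R]_1) : sc (A + B) = sc A + sc B.
Proof. by rewrite /sc mxE. Qed.

Lemma scZ (c : R) (A : 'M[R]_1) : sc (c *: A) = c * sc A.
Proof. by rewrite /sc mxE. Qed.

Lemma scB (A B : 'M[R]_1) : sc (A - B) = sc A - sc B.
Proof. by rewrite /sc !mxE. Qed.

Lemma sc_tr (A : 'M[R]_1) : sc A^T = sc A.
Proof. by rewrite /sc mxE. Qed.

Lemma sc_sum (I : finType) (F : I -> 'M[R]_1) : sc (\sum_i F i) = \sum_i sc (F i).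
Proof. by rewrite /sc summxE. Qed.

Variable n : nat.
Implicit Types (A M T : 'M[R]_n) (x y w : 'cV[R]_n).

Lemma posdef_unitmx A : posdef A -> A \in unitmx.
Proof.
case=> _ Apos; apply/negPn/negP => Anu.
have : kermx A != 0 by rewrite kermx_eq0 row_free_unit.
case/rowV0Pn => v /sub_kermxP vA v0.
have := Apos v^T; rewrite trmx_eq0 trmxK => /(_ v0).
by rewrite vA mul0mx /sc mxE ltxx.
Qed.

Lemma posdef_invmx A : posdef A -> posdef (invmx A).
Proof.
move=> [Asym Apos]; have Au := posdef_unitmx (conj Asym Apos).
split; first by rewrite trmx_inv Asym.
move=> x x0; set z := invmx A *m x.
have xE : x = A *m z by rewrite /z mulKVmx.
have z0 : z != 0 by apply: contraNneq x0 => z0; rewrite xE z0 mulmx0.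
by rewrite -mulmxA -/z {1}xE trmx_mul Asym -mulmxA mulmxA; apply: Apos.
Qed.

Lemma posdef_qform_ge0 A x : posdef A -> 0 <= sc (x^T *m A *m x).
Proof.
move=> [_ Apos]; have [->|x0] := eqVneq x 0; first by rewrite mulmx0 /sc mxE.
exact/ltW/Apos.
Qed.

Lemma posdef_conic (I : finType) (T : I -> 'M[R]_n) (c : I -> R) :
  (forall i, posdef (T i)) -> (forall i, 0 <= c i) -> \sum_i c i != 0 ->
  posdef (\sum_i c i *: T i).
Proof.
move=> Tpd c_ge0 csum_neq0; split.
  by rewrite linear_sum; apply: eq_bigr => i _; rewrite linearZ /= (Tpd i).1.
move=> x x0; rewrite mulmx_sumr mulmx_suml sc_sum.
have qpos i : 0 < sc (x^T *m T i *m x) by apply: (Tpd i).2.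
under eq_bigr do rewrite -scalemxAr -scalemxAl scZ.
have cq_ge0 i : 0 <= c i * sc (x^T *m T i *m x) by rewrite mulr_ge0 // ltW.
rewrite lt_def sumr_ge0 ?andbT => [|i _]; last exact: cq_ge0.
apply/eqP => /(psumr_eq0P (fun i _ => cq_ge0 i)) cq0.
apply/(negP csum_neq0)/eqP/big1 => i _; have /eqP := cq0 i isT.
by rewrite mulf_eq0 (gt_eqF (qpos i)) orbF => /eqP.
Qed.

Lemma qform_le_addr M y w : posdef M -> sc (w^T *m M *m y) = 0 ->
  sc (y^T *m M *m y) <= sc ((y + w)^T *m M *m (y + w)).
Proof.
move=> Mpd wMy0.
have yMw0 : sc (y^T *m M *m w) = 0.
  by rewrite -sc_tr !trmx_mul trmxK Mpd.1 mulmxA.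
rewrite [(y + w)^T]linearD /= !mulmxDl !mulmxDr !scD wMy0 yMw0 add0r addr0 lerDl.
exact: posdef_qform_ge0.
Qed.

End QuadraticForms.

(* Qualified: mathcomp-analysis exports its own univariate [normal_pdf]. *)
Lemma normal_pdf_le_orth (R : realType) (D : nat) (S : 'M[R]_D) (x mu w : 'cV[R]_D)
    (delta : R) :
  posdef S -> sc (w^T *m invmx S *m (x - mu)) = 0 ->
  Defs.normal_pdf (x + delta *: w) mu S <= Defs.normal_pdf x mu S.
Proof.
move=> Spd orth; rewrite /Defs.normal_pdf.
apply: ler_wpM2l; first by rewrite invr_ge0 sqrtr_ge0.
rewrite ler_expR ler_pM2r ?invr_gt0 ?ltr0n // lerN2 addrAC.
apply: qform_le_addr; first exact: posdef_invmx.
by rewrite linearZ /= -!scalemxAl scZ orth mulr0.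
Qed.

Section Ridgeline.
Variables (R : realType) (D K : nat).
Variables (mu : 'I_K -> 'cV[R]_D) (S : 'I_K -> 'M[R]_D) (a : 'I_K -> R).
Hypothesis S_posdef : forall j, posdef (S j).
Hypothesis a_simplex : simplex a.

Lemma S_alpha_unitmx : S_alpha S a \in unitmx.
Proof.
case: a_simplex => a01 a_sum1; apply/posdef_unitmx/posdef_conic.
- by move=> j; apply: posdef_invmx.
- by move=> j; case/andP: (a01 j).
- by rewrite a_sum1 oner_neq0.
Qed.

Lemma sum_vvec_eq0 : \sum_(j < K) a j *: vvec mu S a j = 0.
Proof.
rewrite /vvec; under eq_bigr do rewrite mulmxBr scalerBr scalemxAl.
rewrite sumrB -mulmx_suml -/(S_alpha S a) /ridgeline mulKVmx ?subrr //.
exact: S_alpha_unitmx.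
Qed.

Lemma inW_vvec_orth w : inW mu S a w -> forall j, sc (w^T *m vvec mu S a j) = 0.
Proof.
move=> wW j.
have lastK : (K.-1 < K)%N by rewrite ltn_predL (leq_ltn_trans _ (ltn_ord j)).
pose k : 'I_K := Ordinal lastK.
set c := fun i => sc (w^T *m vvec mu S a i).
have cE i : c i = c k.
  have [iK|Ki] := ltnP i K.-1.
    move/eqP: (wW i k erefl iK); rewrite /dvec mulmxA -(mulmxA _ _ (invmx _)).
    by rewrite mulmxV ?S_alpha_unitmx // mulmx1 mulmxBr scB subr_eq0 => /eqP.
  by congr c; apply: val_inj => /=; move: (ltn_ord i) Ki; lia.
have : sc (w^T *m \sum_(i < K) a i *: vvec mu S a i) = c k.
  rewrite mulmx_sumr sc_sum; under eq_bigr do rewrite -scalemxAr scZ -/(c _) cE.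
  by rewrite -mulr_suml a_simplex.2 mul1r.
by rewrite -/(c j) cE sum_vvec_eq0 mulmx0 /sc mxE => <-.
Qed.

End Ridgeline.

Theorem theorem2 (R : realType) (D K : nat) (hK : (2 <= K)%N)
  (p : 'I_K -> R) (mu : 'I_K -> 'cV[R]_D) (S : 'I_K -> 'M[R]_D)
  (hp : forall j, 0 <= p j <= 1) (hp1 : \sum_(j < K) p j = 1)
  (hS : forall j, posdef (S j))
  (a : 'I_K -> R) (ha : simplex a)
  (w : 'cV[R]_D) (hw : inW mu S a w) :
  forall delta : R,
    mixture p mu S (ridgeline mu S a + delta *: w)
    <= mixture p mu S (ridgeline mu S a).
Proof.
move=> delta; rewrite /mixture; apply: ler_sum => j _.
apply: ler_wpM2l; first by case/andP: (hp j).
apply: normal_pdf_le_orth; first exact: hS.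
by rewrite -mulmxA; apply: inW_vvec_orth.
Qed.
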